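(* Let $L_{n+1},\dots,L_{n+m}\ge 0$ be nonnegative random risks and let $E_{n+1},\dots,E_{n+m}$ be random variables with $E_{n+j}\ge 0$ a.s. and $\mathbb{E}[E_{n+j}L_{n+j}]\le 1$ for every $j\in\{1,\dots,m\}$. Fix $\alpha\in(0,1)$ and let $\hat\tau=\max\{\tau\in\{1,\dots,m\}:\sum_{j=1}^m\mathbf{1}\{E_{n+j}\ge m/(\alpha\tau)\}\ge\tau\}$ (with $\hat\tau=0$ if this set is empty), and set $\hat\psi_{n+j}=\mathbf{1}\{E_{n+j}\ge m/(\alpha\hat\tau)\}$ if $\hat\tau>0$ and $\hat\psi_{n+j}=0$ for all $j$ if $\hat\tau=0$ (this is the e-BH procedure at level $\alpha$). Then $$\mathbb{E}\Big[\frac{\sum_{j=1}^m L_{n+j}\hat\psi_{n+j}}{1\vee\sum_{j=1}^m\hat\psi_{n+j}}\Big]\le\alpha.$$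
   Context: The left-hand side is the selective deployment risk (SDR) of the decisions $\hat\psi_{n+1},\dots,\hat\psi_{n+m}$. *)

From HB Require Import structures.
From mathcomp Require Import all_boot all_order all_algebra.
From mathcomp Require Import all_classical all_reals all_analysis.
Set Implicit Arguments. Unset Strict Implicit. Unset Printing Implicit Defensive.
Import Order.TTheory GRing.Theory Num.Theory.
Local Open Scope ring_scope.

Definition ebh_count (R : realType) (m : nat) (alpha : R) (e : 'I_m -> R) (tau : nat) : nat :=
  #|[set j : 'I_m | m%:R / (alpha * tau%:R) <= e j]|.

Definition ebh_tau (R : realType) (m : nat) (alpha : R) (e : 'I_m -> R) : nat :=
  (\max_(t < m.+1 | (0 < (t : nat))%N && ((t : nat) <= ebh_count alpha e t)%N) (t : nat))%N.

Definition ebh_psi (R : realType) (m : nat) (alpha : R) (e : 'I_m -> R) (j : 'I_m) : bool :=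
  if (0 < ebh_tau alpha e)%N
  then m%:R / (alpha * (ebh_tau alpha e)%:R) <= e j
  else false.

Definition sdr_integrand (R : realType) (m : nat) (alpha : R)
    (e : 'I_m -> R) (l : 'I_m -> R) : R :=
  (\sum_(j < m) l j * (ebh_psi alpha e j)%:R) /
  Num.max 1 (\sum_(j < m) (ebh_psi alpha e j)%:R).

From HB Require Import structures.
From mathcomp Require Import all_boot all_order all_algebra.
From mathcomp Require Import all_classical all_reals all_analysis.
From mathcomp Require Import ring measurable_realfun.
Set Implicit Arguments. Unset Strict Implicit. Unset Printing Implicit Defensive.
Import Order.TTheory GRing.Theory Num.Theory.
Local Open Scope ring_scope.
Local Open Scope classical_set_scope.
Import HBNNSimple.

(* When e-BH selects with threshold tau > 0, it selects at least tau indices,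
   each with e_j >= m / (alpha tau); hence every selected index contributes
   l_j / #selected <= l_j / tau <= (alpha / m) e_j l_j.  So the SDR integrand
   is pointwise below (alpha / m) sum_j e_j l_j, whose expectation is at most
   alpha because E[e_j l_j] <= 1.  No dependence structure is needed. *)

Section ebh_deterministic.
Variables (R : realType) (m : nat) (alpha : R) (e : 'I_m -> R).

Let tau := ebh_tau alpha e.

Lemma ebh_tau_le : (tau <= m)%N.
Proof. by apply/bigmax_leqP => t _; rewrite -ltnS. Qed.

Lemma ebh_tau_le_count : (0 < tau)%N -> (tau <= ebh_count alpha e tau)%N.
Proof.
rewrite /tau /ebh_tau; apply: (big_ind (fun t => 0 < t -> t <= ebh_count alpha e t)%N).
- by [].
- by move=> s t Hs Ht; case: (leqP s t).
- by move=> t /andP[].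
Qed.

Lemma ebh_psiE j : (0 < tau)%N ->
  ebh_psi alpha e j = (m%:R / (alpha * tau%:R) <= e j).
Proof. by rewrite /ebh_psi -/tau => ->. Qed.

Lemma sum_ebh_psi : (0 < tau)%N ->
  \sum_(j < m) (ebh_psi alpha e j)%:R = (ebh_count alpha e tau)%:R :> R.
Proof.
move=> tau_gt0; rewrite /ebh_count -sum1_card natr_sum [RHS]big_mkcond /=.
by apply: eq_bigr => j _; rewrite ebh_psiE // inE; case: ifP.
Qed.

Lemma ebh_psi_inv_tau j : 0 < alpha -> ebh_psi alpha e j ->
  tau%:R^-1 <= alpha / m%:R * e j.
Proof.
move=> alpha_gt0; rewrite /ebh_psi -/tau.
case: ifP => // tau_gt0 sel.
have m_gt0 : (0 < m)%N by apply: leq_trans tau_gt0 ebh_tau_le.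
have -> : tau%:R^-1 = alpha / m%:R * (m%:R / (alpha * tau%:R)).
  by field; rewrite !pnatr_eq0 -!lt0n tau_gt0 m_gt0 lt0r_neq0.
by apply: ler_wpM2l sel; rewrite divr_ge0 ?ler0n // ltW.
Qed.

End ebh_deterministic.

Lemma sdr_integrand_ge0 (R : realType) (m : nat) (alpha : R) (e l : 'I_m -> R) :
  (forall j, 0 <= l j) -> 0 <= sdr_integrand alpha e l.
Proof.
move=> l_ge0; apply: divr_ge0; last by rewrite le_max ler01.
by apply: sumr_ge0 => j _; apply: mulr_ge0.
Qed.

Lemma sdr_integrand_le (R : realType) (m : nat) (alpha : R) (e l : 'I_m -> R) :
  0 < alpha -> (forall j, 0 <= l j) ->
  sdr_integrand alpha e l <= alpha / m%:R * \sum_(j < m) Num.max (e j) 0 * l j.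
Proof.
move=> alpha_gt0 l_ge0; set tau := ebh_tau alpha e.
have rhs_ge0 j : 0 <= alpha / m%:R * (Num.max (e j) 0 * l j).
  by rewrite !mulr_ge0 ?invr_ge0 ?ler0n ?le_max ?lexx ?orbT // ltW.
rewrite mulr_sumr /sdr_integrand.
have [tau0 | tau_gt0] := posnP tau.
  rewrite big1 ?mul0r ?sumr_ge0 // => j _.
  by rewrite /ebh_psi -/tau tau0 mulr0.
have count_ge_tau : tau%:R <= (ebh_count alpha e tau)%:R :> R.
  by rewrite ler_nat; exact: ebh_tau_le_count.
rewrite sum_ebh_psi // max_r; last by apply: le_trans count_ge_tau; rewrite ler1n.
rewrite mulr_suml; apply: ler_sum => j _.
have [sel | _] := boolP (ebh_psi alpha e j); last by rewrite mulr0 mul0r.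
rewrite mulr1 mulrC mulrA; apply: ler_wpM2r => //.
apply: (@le_trans _ _ tau%:R^-1).
  have tau_gt0R : 0 < tau%:R :> R by rewrite ltr0n.
  have count_gt0 : 0 < (ebh_count alpha e tau)%:R :> R.
    exact: lt_le_trans tau_gt0R count_ge_tau.
  by rewrite lef_pV2 ?posrE.
apply: le_trans (ebh_psi_inv_tau alpha_gt0 sel) _.
have e_le_max : e j <= Num.max (e j) 0 by rewrite le_max lexx.
by apply: ler_wpM2l e_le_max; rewrite divr_ge0 ?ler0n // ltW.
Qed.

(* No measurability of [f1] is needed (the e-BH integrand is never shown
   measurable): the integral of a nonnegative function is the supremum of the
   integrals of the simple functions below it. *)
Lemma ge0_le_integral_nomeas d (T : measurableType d) (R : realType)
    (mu : {measure set T -> \bar R}) (f1 f2 : T -> \bar R) :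
  (forall x, 0 <= f1 x)%E -> (forall x, f1 x <= f2 x)%E ->
  (\int[mu]_x f1 x <= \int[mu]_x f2 x)%E.
Proof.
move=> f1_ge0 f12.
have f2_ge0 x : (0 <= f2 x)%E by exact: le_trans (f1_ge0 x) (f12 x).
rewrite !ge0_integralTE //; apply: ge_ereal_sup => _ [h /= hf1 <-].
apply: le_ereal_sup_tmp; exists (sintegral mu h) => //.
by exists h => // x; exact: le_trans (hf1 x) (f12 x).
Qed.

Lemma integral_maxr0M_ae d (T : measurableType d) (R : realType)
    (mu : {measure set T -> \bar R}) (f g : T -> R) :
  measurable_fun setT f -> measurable_fun setT g -> {ae mu, forall x, 0 <= f x} ->
  (\int[mu]_x ((Num.max (f x) 0 * g x)%:E) = \int[mu]_x ((f x * g x)%:E))%E.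
Proof.
move=> mf mg f_ge0; apply: ae_eq_integral => //.
- by apply/measurable_EFinP; apply: measurable_funM => //;
    apply: measurable_maxr => //; exact: measurable_cst.
- by apply/measurable_EFinP; exact: measurable_funM.
- by apply: filterS f_ge0 => x fx_ge0 _; rewrite max_l.
Qed.

Lemma ge0_integralZ_sum_le d (T : measurableType d) (R : realType)
    (mu : {measure set T -> \bar R}) (I : finType) (c : R) (g : I -> T -> R) :
  0 <= c -> (forall j x, 0 <= g j x) -> (forall j, measurable_fun setT (g j)) ->
  (forall j, \int[mu]_x ((g j x)%:E) <= 1)%E ->
  (\int[mu]_x ((c * \sum_j g j x)%:E) <= (c * #|I|%:R)%:E)%E.
Proof.
move=> c_ge0 g_ge0 g_meas int_g_le1.
have gE_meas j : measurable_fun setT (fun x => (g j x)%:E).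
  exact/measurable_EFinP.
under eq_integral do rewrite EFinM -sumEFin.
rewrite ge0_integralZl_EFin //; last 2 first.
- by move=> x _; rewrite sume_ge0 // => j _; rewrite lee_fin.
- exact: emeasurable_sum.
rewrite ge0_integral_sum //; last by move=> j x _; rewrite lee_fin.
have sum_le : (\sum_j \int[mu]_x ((g j x)%:E) <= \sum_(j : I) 1%:E)%E.
  by apply: lee_sum => j _; exact: int_g_le1.
have cE_ge0 : (0 <= c%:E)%E by rewrite lee_fin.
apply: le_trans (lee_wpmul2l cE_ge0 sum_le) _.
by rewrite sumEFin sumr_const -EFinM.
Qed.

Theorem theorem3p2 (d : measure_display) (T : measurableType d) (R : realType)
  (P : probability T R) (m : nat) (L E : 'I_m -> T -> R) (alpha : R)
  (L_meas : forall j, measurable_fun setT (L j))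
  (E_meas : forall j, measurable_fun setT (E j))
  (L_ge0 : forall j x, 0 <= L j x)
  (E_ge0 : forall j, {ae P, forall x, 0 <= E j x})
  (EL_le1 : forall j, (\int[P]_x ((E j x * L j x)%:E) <= 1)%E)
  (alpha_gt0 : 0 < alpha) (alpha_lt1 : alpha < 1) :
  (\int[P]_x ((sdr_integrand alpha (fun j => E j x) (fun j => L j x))%:E)
     <= alpha%:E)%E.
Proof.
pose c := alpha / m%:R.
pose g j x := Num.max (E j x) 0 * L j x.
have c_ge0 : 0 <= c by rewrite divr_ge0 ?ler0n // ltW.
have g_meas j : measurable_fun setT (g j).
  by apply: measurable_funM => //; apply: measurable_maxr => //; exact: measurable_cst.
have int_g_le1 j : (\int[P]_x ((g j x)%:E) <= 1)%E.
  by rewrite integral_maxr0M_ae //; exact: EL_le1.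
apply: le_trans (@ge0_le_integral_nomeas _ _ _ P _
  (fun x => (c * \sum_(j < m) g j x)%:E) _ _) _.
- by move=> x; rewrite lee_fin sdr_integrand_ge0.
- by move=> x; rewrite lee_fin sdr_integrand_le.
apply: le_trans (ge0_integralZ_sum_le c_ge0 _ g_meas int_g_le1) _.
  by move=> j x; rewrite mulr_ge0 // le_max lexx orbT.
rewrite card_ord lee_fin /c.
(* [alpha / 0 = 0] when [m = 0] *)
have [->|m_gt0] := posnP m; first by rewrite mulr0 ltW.
by rewrite divfK // pnatr_eq0 -lt0n.
Qed.
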